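(* Let $n\ge4$, $r_1,r_2,r_3\in\mathbb{Z}_+$ with $r_1+r_2+r_3=n-1$, and let $-1<\alpha_1<1$, $0\le\alpha_2,\alpha_3<1$ with $\alpha_1+\alpha_2+\alpha_3=1$, $r_1+\alpha_1\ge r_2+\alpha_2$ and $r_1+\alpha_1\ge r_3+\alpha_3$. Then $$\mathfrak{L}_n(r_1,r_2,r_3,\alpha_1,\alpha_2,\alpha_3)\le \mathfrak{L}_n(r_1+r_3,r_2,0,\alpha_1,\alpha_2,\alpha_3)+2^{r_2+r_3+2}+2^{r_2}-r_3+\begin{cases}2^{r_3}, & r_2\ge1,\\ 2^{r_3+1}\ln n, & r_2=0.\end{cases}$$
   Context: Points of a triangle are identified with barycentric coordinates $\lambda=(\lambda_1,\lambda_2,\lambda_3)$, $\lambda_r\ge0$, $\sum\lambda_r=1$. For an integer $n\ge1$ let $I=\{i=(i_1,i_2,i_3)\in\mathbb{Z}_+^3: i_1+i_2+i_3=n\}$, and let $l_i(\lambda)=\prod_{s=1}^{3}\frac{1}{i_s!}\prod_{t=0}^{i_s-1}(n\lambda_s-t)$ (the Lagrange fundamental polynomials for the equally spaced nodes $i/n$, $i\in I$). The Lebesgue function is $\mathcal{L}_n(\lambda)=\sum_{i\in I}|l_i(\lambda)|$. For $r_s\in\mathbb{Z}_+$ with $r_1+r_2+r_3=n-1$ and reals $\alpha_s$ with $\alpha_1+\alpha_2+\alpha_3=1$, write $\mathfrak{L}_n(r_1,r_2,r_3,\alpha_1,\alpha_2,\alpha_3)=\mathcal{L}_n(\lambda)$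 where $\lambda_s=(r_s+\alpha_s)/n$, $s=1,2,3$. *)

From Stdlib Require Import Reals Lra Arith Factorial.
Open Scope R_scope.

Fixpoint fallprod (k : nat) (x : R) : R :=
  match k with
  | O => 1
  | S k' => fallprod k' x * (x - INR k')
  end.

Definition lag_factor (n k : nat) (lam : R) : R :=
  / INR (fact k) * fallprod k (INR n * lam).

Definition lag_poly (n i1 i2 i3 : nat) (l1 l2 l3 : R) : R :=
  lag_factor n i1 l1 * lag_factor n i2 l2 * lag_factor n i3 l3.

(* Lebesgue function: sum over i in I = {i in Z_+^3 : i1+i2+i3 = n}
   enumerated as i1 = 0..n, i2 = 0..n-i1, i3 = n-i1-i2. *)
Definition Lebesgue (n : nat) (l1 l2 l3 : R) : R :=
  sum_f_R0 (fun i1 =>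
    sum_f_R0 (fun i2 => Rabs (lag_poly n i1 i2 (n - i1 - i2) l1 l2 l3))
             (n - i1)) n.

Definition fL (n r1 r2 r3 : nat) (a1 a2 a3 : R) : R :=
  Lebesgue n ((INR r1 + a1) / INR n) ((INR r2 + a2) / INR n)
             ((INR r3 + a3) / INR n).

From Stdlib Require Import Reals Lra Lia Psatz Arith Factorial.
Open Scope R_scope.

(* Write [b(x,k) = x(x-1)...(x-k+1)/k!], so that [l_i(lambda) = b(x1,i1) b(x2,i2) b(x3,i3)]
   with [x_s = n lambda_s = r_s + a_s].  Summing over [i1] first,
   [L_n = sum_i2 |b(x2,i2)| sum_i |b(x1,i) b(x3,m-i)|] with [m = n - i2].  By Vandermonde's
   identity the inner sum is [b(x1+x3,m)] plus twice the sum of the negative parts of its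
   terms, and [x1 + x3 = (x1 + r3) + a3] is the same on both sides of the inequality; so only
   the negative parts have to be compared.  Those with [i <= r1] are dominated termwise by the
   negative parts of the comparison convolution [b(x1+r3, i+r3) b(a3, m-i-r3)], because the
   two differ by a ratio of [r3]-fold falling products that is at most [1].  Those with
   [i > r1] use [|b(x1,i)| <= 1] (and [<= 1/3] when [b(x1,i) < 0]), and contribute at most
   [2^(r3+1)/3 + 1/4].  Finally [sum_k |b(r+a,k)| <= 2^(r+1) + 1/4], the tail past [r+1]
   telescoping. *)

Lemma INR_fact_pos k : 0 < INR (fact k).
Proof. apply lt_0_INR, lt_O_fact. Qed.

Lemma fallprod_S_l k y : fallprod (S k) y = y * fallprod k (y - 1).
Proof.
  induction k as [|k IH]; [simpl; ring|].
  change (fallprod (S (S k)) y) with (fallprod (S k) y * (y - INR (S k))).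
  rewrite IH, S_INR; simpl. ring.
Qed.

Lemma fallprod_add i s y : fallprod (i + s) y = fallprod s y * fallprod i (y - INR s).
Proof.
  induction i as [|i IH]; simpl; [ring|].
  rewrite IH, plus_INR. ring.
Qed.

Lemma fallprod_INR k p : fallprod k (INR (p + k)) * INR (fact p) = INR (fact (p + k)).
Proof.
  revert p; induction k as [|k IH]; intros p.
  - simpl. rewrite Nat.add_0_r. ring.
  - simpl fallprod. replace (p + S k)%nat with (S p + k)%nat by lia.
    rewrite <- IH. change (fact (S p)) with (S p * fact p)%nat.
    rewrite mult_INR, !plus_INR, !S_INR. ring.
Qed.

Lemma fallprod_pos k x : INR k < x + 1 -> 0 < fallprod k x.
Proof.
  induction k as [|k IH]; intros Hk; simpl; [lra|].
  rewrite S_INR in Hk. apply Rmult_lt_0_compat; [apply IH|]; lra.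
Qed.

Lemma fallprod_le k x y : INR k <= x + 1 -> x <= y -> 0 <= fallprod k x <= fallprod k y.
Proof.
  induction k as [|k IH]; intros Hk Hxy; simpl; [lra|].
  rewrite S_INR in Hk. destruct IH as [H0 H1]; [lra|lra|].
  split; [apply Rmult_le_pos|apply Rmult_le_compat]; lra.
Qed.

Lemma fallprod_mul_le k x y z w :
  (forall t, (t < k)%nat -> 0 <= (x - INR t) * (y - INR t) <= (z - INR t) * (w - INR t)) ->
  0 <= fallprod k x * fallprod k y <= fallprod k z * fallprod k w.
Proof.
  induction k as [|k IH]; intros H; simpl; [lra|].
  destruct IH as [H1 H2]; [intros; apply H; lia|].
  destruct (H k ltac:(lia)) as [H3 H4].
  replace (fallprod k x * (x - INR k) * (fallprod k y * (y - INR k))) with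
    (fallprod k x * fallprod k y * ((x - INR k) * (y - INR k))) by ring.
  replace (fallprod k z * (z - INR k) * (fallprod k w * (w - INR k))) with
    (fallprod k z * fallprod k w * ((z - INR k) * (w - INR k))) by ring.
  split; [apply Rmult_le_pos|apply Rmult_le_compat]; lra.
Qed.

Definition binom (x : R) (k : nat) : R := / INR (fact k) * fallprod k x.

Lemma lag_factor_binom n k lam : lag_factor n k lam = binom (INR n * lam) k.
Proof. reflexivity. Qed.

Lemma binom_nonneg x k : INR k <= x + 1 -> 0 <= binom x k.
Proof.
  intros Hk. apply Rmult_le_pos; [left; apply Rinv_0_lt_compat, INR_fact_pos|].
  apply (fallprod_le k x x); lra.
Qed.

Lemma binom_S_l x k : INR (S k) * binom x (S k) = x * binom (x - 1) k.
Proof.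
  unfold binom. rewrite fallprod_S_l. change (fact (S k)) with (S k * fact k)%nat.
  pose proof (INR_fact_pos k). assert (0 < INR (S k)) by (apply lt_0_INR; lia).
  rewrite mult_INR. field. lra.
Qed.

Lemma Rabs_binom_S x k : Rabs (binom x (S k)) * INR (S k) = Rabs (binom x k) * Rabs (x - INR k).
Proof.
  unfold binom. change (fallprod (S k) x) with (fallprod k x * (x - INR k)).
  change (fact (S k)) with (S k * fact k)%nat. rewrite mult_INR.
  pose proof (INR_fact_pos k). assert (0 < INR (S k)) by (apply lt_0_INR; lia).
  rewrite !Rabs_mult, !Rabs_inv, (Rabs_pos_eq (INR (S k) * _)), (Rabs_pos_eq (INR (fact k))) by nra.
  field. lra.
Qed.

Lemma binom_shift y s i :
  binom (y + INR s) (i + s) = binom y i * (fallprod s (y + INR s) / fallprod s (INR (i + s))).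
Proof.
  assert (Hf : 0 < fallprod s (INR (i + s)))
    by (apply fallprod_pos; rewrite plus_INR; pose proof (pos_INR i); lra).
  pose proof (INR_fact_pos i).
  unfold binom. rewrite <- fallprod_INR, fallprod_add.
  replace (y + INR s - INR s) with y by ring. field. lra.
Qed.

Lemma binom_vandermonde m x z :
  sum_f_R0 (fun i => binom x i * binom z (m - i)) m = binom (x + z) m.
Proof.
  revert x z; induction m as [|m IH]; intros x z.
  - unfold binom. simpl. field.
  - apply Rmult_eq_reg_l with (INR (S m)); [| apply not_0_INR; lia].
    rewrite binom_S_l, scal_sum.
    transitivity (sum_f_R0 (fun i => INR i * binom x i * binom z (S m - i)) (S m)
                + sum_f_R0 (fun i => binom x i * (INR (S m - i) * binom z (S m - i))) (S m)).
    { rewrite <- sum_plus. apply sum_eq. intros i Hi. rewrite minus_INR by lia. ring. }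
    rewrite decomp_sum, tech5 by lia. simpl pred. rewrite Nat.sub_diag. simpl INR.
    rewrite (sum_eq (fun i => INR (S i) * binom x (S i) * binom z (S m - S i))
                    (fun i => binom (x - 1) i * binom z (m - i) * x)) by
      (intros i _; replace (S m - S i)%nat with (m - i)%nat by lia; rewrite binom_S_l; ring).
    rewrite (sum_eq (fun i => binom x i * (INR (S m - i) * binom z (S m - i)))
                    (fun i => binom x i * binom (z - 1) (m - i) * z)) by
      (intros i Hi; replace (S m - i)%nat with (S (m - i)) by lia; rewrite binom_S_l; ring).
    rewrite <- !scal_sum, !IH.
    replace (x - 1 + z) with (x + z - 1) by ring. replace (x + (z - 1)) with (x + z - 1) by ring.
    ring.
Qed.

Lemma sum_f_R0_triangle_swap N (h : nat -> nat -> R) :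
  sum_f_R0 (fun i => sum_f_R0 (fun j => h i j) (N - i)) N =
  sum_f_R0 (fun j => sum_f_R0 (fun i => h i j) (N - j)) N.
Proof.
  revert h; induction N as [|N IH]; intros h; [reflexivity|].
  rewrite decomp_sum by lia. simpl pred.
  rewrite (sum_eq (fun i => sum_f_R0 (fun j => h (S i) j) (S N - S i))
                  (fun i => sum_f_R0 (fun j => h (S i) j) (N - i))) by (intros; f_equal; lia).
  rewrite (IH (fun i j => h (S i) j)), Nat.sub_0_r.
  rewrite (tech5 (fun j => sum_f_R0 (fun i => h i j) (S N - j))), Nat.sub_diag.
  rewrite (sum_eq (fun j => sum_f_R0 (fun i => h i j) (S N - j))
                  (fun j => h 0%nat j + sum_f_R0 (fun i => h (S i) j) (N - j))).
  - rewrite sum_plus, tech5. simpl (sum_f_R0 _ 0). change (fun j => h 0%nat j) with (h 0%nat). ring.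
  - intros j Hj. replace (S N - j)%nat with (S (N - j)) by lia.
    rewrite decomp_sum by lia. reflexivity.
Qed.

Lemma sum_f_R0_reverse f m : sum_f_R0 (fun i => f (m - i)%nat) m = sum_f_R0 f m.
Proof.
  revert f; induction m as [|m IH]; intros f; [reflexivity|].
  rewrite decomp_sum, tech5 by lia. simpl pred.
  rewrite (sum_eq (fun i => f (S m - S i)%nat) (fun i => f (m - i)%nat)) by (intros; f_equal; lia).
  rewrite IH, Nat.sub_0_r. ring.
Qed.

Lemma sum_f_R0_le_sum_f_R0 f m N : (m <= N)%nat -> (forall i, 0 <= f i) ->
  sum_f_R0 f m <= sum_f_R0 f N.
Proof.
  intros Hm Hf. induction Hm as [|N Hm IH]; [lra|].
  rewrite tech5. specialize (Hf (S N)). lra.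
Qed.

Lemma sum_f_R0_truncate f k N : (k <= N)%nat ->
  sum_f_R0 (fun i => if (i <=? k)%nat then f i else 0) N = sum_f_R0 f k.
Proof.
  intros Hk. induction Hk as [|N Hk IH].
  - apply sum_eq. intros i Hi. now rewrite (proj2 (Nat.leb_le i k) Hi).
  - rewrite tech5, IH. destruct (Nat.leb_spec (S N) k); [lia|ring].
Qed.

Lemma sum_f_R0_split_at f k N :
  sum_f_R0 f N = sum_f_R0 (fun i => if (i <=? k)%nat then f i else 0) N +
                 sum_f_R0 (fun i => if (i <=? k)%nat then 0 else f i) N.
Proof. rewrite <- sum_plus. apply sum_eq. intros i _. destruct (i <=? k)%nat; ring. Qed.

Lemma sum_f_R0_offset_le Q s N : (forall k, 0 <= Q k) ->
  sum_f_R0 (fun i => Q (s + i)%nat) N <= sum_f_R0 Q (s + N).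
Proof.
  intros HQ. induction N as [|N IH].
  - rewrite Nat.add_0_r. destruct s; simpl; [lra|].
    pose proof (cond_pos_sum Q s HQ). rewrite Nat.add_0_r. lra.
  - rewrite tech5, Nat.add_succ_r, tech5. lra.
Qed.

Lemma sum_f_R0_shift_le P Q s m :
  (forall k, 0 <= Q k) ->
  (forall i, (i + s <= m)%nat -> P i <= Q (i + s)%nat) ->
  (forall i, (m < i + s)%nat -> P i <= 0) ->
  sum_f_R0 P m <= sum_f_R0 Q m.
Proof.
  intros HQ Hmatch Hrest. destruct (le_lt_dec s m) as [Hs|Hs].
  2: { apply sum_Rle. intros i _. specialize (Hrest i ltac:(lia)). specialize (HQ i). lra. }
  apply Rle_trans with (sum_f_R0 (fun i => if (i <=? m - s)%nat then P i else 0) m).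
  { apply sum_Rle. intros i Hi. destruct (Nat.leb_spec i (m - s)); [lra|].
    apply Hrest. lia. }
  rewrite sum_f_R0_truncate by lia.
  replace m with (s + (m - s))%nat at 2 by lia.
  eapply Rle_trans; [|apply (sum_f_R0_offset_le Q s (m - s) HQ)].
  apply sum_Rle. intros i Hi. rewrite Nat.add_comm. apply Hmatch. lia.
Qed.

Definition negpart (t : R) : R := (Rabs t - t) / 2.

Lemma negpart_nonneg t : 0 <= negpart t.
Proof. unfold negpart. pose proof (Rle_abs t). lra. Qed.

Lemma negpart_of_nonneg t : 0 <= t -> negpart t = 0.
Proof. intros. unfold negpart. rewrite Rabs_pos_eq by lra. lra. Qed.

Lemma negpart_le_Rabs t : negpart t <= Rabs t.
Proof.
  unfold negpart. pose proof (Rabs_pos t). pose proof (Rle_abs (- t)).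
  rewrite Rabs_Ropp in *. lra.
Qed.

Lemma negpart_mulr c q : 0 <= q -> negpart (c * q) = negpart c * q.
Proof. intros Hq. unfold negpart. rewrite Rabs_mult, (Rabs_pos_eq q) by lra. field. Qed.

Definition conv_abs (x z : R) (m : nat) : R :=
  sum_f_R0 (fun i => Rabs (binom x i * binom z (m - i))) m.

Definition conv_neg (x z : R) (m : nat) : R :=
  sum_f_R0 (fun i => negpart (binom x i * binom z (m - i))) m.

Lemma conv_abs_vandermonde x z m : conv_abs x z m = binom (x + z) m + 2 * conv_neg x z m.
Proof.
  unfold conv_abs, conv_neg. rewrite <- binom_vandermonde, scal_sum, <- sum_plus.
  apply sum_eq. intros i _. unfold negpart. field.
Qed.

Lemma Lebesgue_conv_abs n y1 y2 y3 : (0 < n)%nat ->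
  Lebesgue n (y1 / INR n) (y2 / INR n) (y3 / INR n) =
  sum_f_R0 (fun i2 => Rabs (binom y2 i2) * conv_abs y1 y3 (n - i2)) n.
Proof.
  intros Hn. assert (Hn' : INR n <> 0) by (apply not_0_INR; lia).
  unfold Lebesgue. rewrite sum_f_R0_triangle_swap.
  apply sum_eq. intros i2 _. unfold conv_abs. rewrite scal_sum.
  apply sum_eq. intros i1 _.
  unfold lag_poly. rewrite !lag_factor_binom.
  replace (n - i1 - i2)%nat with (n - i2 - i1)%nat by lia.
  replace (INR n * (y1 / INR n)) with y1 by (field; auto).
  replace (INR n * (y2 / INR n)) with y2 by (field; auto).
  replace (INR n * (y3 / INR n)) with y3 by (field; auto).
  rewrite !Rabs_mult. ring.
Qed.

Lemma Lebesgue_sub_conv_neg n y1 y2 y3 z1 z3 : (0 < n)%nat -> y1 + y3 = z1 + z3 ->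
  Lebesgue n (y1 / INR n) (y2 / INR n) (y3 / INR n) -
  Lebesgue n (z1 / INR n) (y2 / INR n) (z3 / INR n) =
  2 * sum_f_R0 (fun i2 => Rabs (binom y2 i2) *
                 (conv_neg y1 y3 (n - i2) - conv_neg z1 z3 (n - i2))) n.
Proof.
  intros Hn Hsum. rewrite !Lebesgue_conv_abs, <- minus_sum, scal_sum by exact Hn.
  apply sum_eq. intros i2 _. rewrite !conv_abs_vandermonde, Hsum. ring.
Qed.

Lemma Rmult_one_minus_le_quarter a : a * (1 - a) <= / 4.
Proof. pose proof (Rle_0_sqr (a - / 2)). unfold Rsqr in *. nra. Qed.

Lemma Rabs_binom_S_le x k : -1 < x -> x <= INR k ->
  Rabs (binom x (S k)) <= Rabs (binom x k).
Proof.
  intros Hx Hk. pose proof (Rabs_binom_S x k) as E.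
  rewrite (Rabs_left1 (x - INR k)) in E by lra. rewrite S_INR in E.
  pose proof (Rabs_pos (binom x k)). pose proof (Rabs_pos (binom x (S k))).
  apply Rmult_le_reg_r with (INR k + 1); [pose proof (pos_INR k); lra|]. nra.
Qed.

Lemma Rabs_binom_antitone x j i : -1 < x -> x <= INR j -> (j <= i)%nat ->
  Rabs (binom x i) <= Rabs (binom x j).
Proof.
  intros Hx Hj Hi. induction Hi as [|i Hi IH]; [lra|].
  assert (INR j <= INR i) by (apply le_INR; lia).
  pose proof (Rabs_binom_S_le x i Hx ltac:(lra)). lra.
Qed.

Lemma Rabs_binom_le_C r a k : 0 <= a < 1 -> (k <= S r)%nat ->
  Rabs (binom (INR r + a) k) <= C (S r) k.
Proof.
  intros Ha Hk. set (p := (S r - k)%nat).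
  assert (Hk' : INR k <= INR r + 1) by (rewrite <- S_INR; apply le_INR; lia).
  destruct (fallprod_le k (INR r + a) (INR (p + k))) as [H0 H1]; [lra| |].
  { replace (p + k)%nat with (S r) by lia. rewrite S_INR. lra. }
  pose proof (fallprod_INR k p) as E. replace (p + k)%nat with (S r) in * by lia.
  pose proof (INR_fact_pos k). pose proof (INR_fact_pos p).
  unfold binom, C. fold p.
  rewrite Rabs_pos_eq by (apply Rmult_le_pos; [left; apply Rinv_0_lt_compat|]; lra).
  rewrite <- E. apply Rmult_le_reg_l with (INR (fact k)); [lra|].
  field_simplify; lra.
Qed.

Lemma binom_le_1 x r : INR r <= x + 1 -> x <= INR r -> 0 <= binom x r <= 1.
Proof.
  intros H0 H1. destruct (fallprod_le r x (INR (0 + r)) H0 H1) as [F0 F1].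
  pose proof (fallprod_INR r 0) as E. simpl in E. rewrite Rmult_1_r in E.
  pose proof (INR_fact_pos r). simpl (0 + r)%nat in F1.
  unfold binom. split; [apply Rmult_le_pos; [left; apply Rinv_0_lt_compat|]; lra|].
  apply Rmult_le_reg_l with (INR (fact r)); [lra|].
  rewrite <- Rmult_assoc, Rinv_r, Rmult_1_l by lra. lra.
Qed.

Lemma C_S_diag r : C (S r) r = INR (S r).
Proof.
  unfold C. replace (S r - r)%nat with 1%nat by lia.
  change (fact (S r)) with (S r * fact r)%nat. rewrite mult_INR.
  pose proof (INR_fact_pos r). simpl. field. lra.
Qed.

Lemma binom_succ_le r a : 0 <= a < 1 -> 0 <= binom (INR r + a) (S r) <= a.
Proof.
  intros Ha. pose proof (Rabs_binom_S (INR r + a) r) as E.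
  pose proof (Rabs_binom_le_C r a r Ha ltac:(lia)) as Hr. rewrite C_S_diag in Hr.
  assert (0 <= binom (INR r + a) (S r)) by (apply binom_nonneg; rewrite S_INR; lra).
  replace (INR r + a - INR r) with a in E by ring.
  rewrite (Rabs_pos_eq a), (Rabs_pos_eq (binom _ (S r))) in E by lra.
  pose proof (Rabs_pos (binom (INR r + a) r)). pose proof (pos_INR r). rewrite S_INR in *.
  split; [lra|]. nra.
Qed.

Lemma Rabs_binom_succ_le_neg r a : -1 < a < 0 ->
  Rabs (binom (INR r + a) (S r)) <= / (INR r + 1).
Proof.
  intros Ha. pose proof (Rabs_binom_S (INR r + a) r) as E.
  destruct (binom_le_1 (INR r + a) r) as [B0 B1]; [lra|lra|].
  replace (INR r + a - INR r) with a in E by ring.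
  rewrite (Rabs_pos_eq (binom _ r)), (Rabs_left a) in E by lra. rewrite S_INR in E.
  pose proof (pos_INR r). pose proof (Rabs_pos (binom (INR r + a) (S r))).
  apply Rmult_le_reg_r with (INR r + 1); [lra|]. rewrite Rinv_l by lra. nra.
Qed.

Lemma Rabs_binom_past_le_1 r a i : -1 < a < 1 -> (S r <= i)%nat ->
  Rabs (binom (INR r + a) i) <= 1.
Proof.
  intros Ha Hi.
  assert (Hanti : Rabs (binom (INR r + a) i) <= Rabs (binom (INR r + a) (S r)))
    by (apply Rabs_binom_antitone; [pose proof (pos_INR r); lra|rewrite S_INR; lra|lia]).
  destruct (Rle_lt_dec 0 a).
  - pose proof (binom_succ_le r a ltac:(lra)).
    rewrite (Rabs_pos_eq (binom _ (S r))) in Hanti by lra. lra.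
  - pose proof (Rabs_binom_succ_le_neg r a ltac:(lra)). pose proof (pos_INR r).
    assert (/ (INR r + 1) <= 1) by (rewrite <- Rinv_1; apply Rinv_le_contravar; lra). lra.
Qed.

Lemma Rabs_binom_past_neg_le r a i : -1 < a < 1 -> (a < 0 -> 2 <= INR r) ->
  (S r <= i)%nat -> binom (INR r + a) i < 0 -> Rabs (binom (INR r + a) i) <= / 3.
Proof.
  intros Ha Hr Hi Hneg. pose proof (pos_INR r).
  destruct (Rle_lt_dec 0 a) as [Ha0|Ha0].
  - (* [b(r+a, r+1) >= 0] forces [i >= r+2], and
       [|b(r+a, r+2)| = b(r+a, r+1) (1-a)/(r+2) <= 1/8] *)
    destruct (binom_succ_le r a ltac:(lra)) as [B0 B1].
    assert (Hi2 : (S (S r) <= i)%nat) by (destruct (Nat.eq_dec i (S r)); [subst; lra|lia]).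
    assert (Hanti : Rabs (binom (INR r + a) i) <= Rabs (binom (INR r + a) (S (S r))))
      by (apply Rabs_binom_antitone; [lra|rewrite !S_INR; lra|lia]).
    pose proof (Rabs_binom_S (INR r + a) (S r)) as E.
    replace (INR r + a - INR (S r)) with (a - 1) in E by (rewrite S_INR; ring).
    rewrite (Rabs_pos_eq (binom _ (S r))), (Rabs_left1 (a - 1)) in E by lra. rewrite !S_INR in E.
    pose proof (Rabs_pos (binom (INR r + a) (S (S r)))).
    assert (binom (INR r + a) (S r) * (1 - a) <= a * (1 - a)) by (apply Rmult_le_compat_r; lra).
    pose proof (Rmult_one_minus_le_quarter a).
    assert (Rabs (binom (INR r + a) (S (S r))) * 2 <= / 4) by nra. lra.
  - pose proof (Rabs_binom_antitone (INR r + a) (S r) i) as Hanti. rewrite S_INR in Hanti.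
    pose proof (Rabs_binom_succ_le_neg r a ltac:(lra)). specialize (Hr Ha0).
    assert (/ (INR r + 1) <= / 3) by (apply Rinv_le_contravar; lra).
    specialize (Hanti ltac:(lra) ltac:(lra) Hi). lra.
Qed.

Lemma sum_C r : sum_f_R0 (fun k => C r k) r = 2 ^ r.
Proof.
  replace 2 with (1 + 1) by ring. rewrite binomial.
  apply sum_eq. intros. rewrite !pow1. ring.
Qed.

Lemma sum_Rabs_binom_head r a : 0 <= a < 1 ->
  sum_f_R0 (fun k => Rabs (binom (INR r + a) k)) (S r) <= 2 ^ S r.
Proof.
  intros Ha. rewrite <- sum_C. apply sum_Rle. intros k Hk. now apply Rabs_binom_le_C.
Qed.

Lemma sum_Rabs_binom_tail r a N : 0 <= a < 1 -> (S r <= N)%nat ->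
  (INR r + a) * sum_f_R0 (fun k => Rabs (binom (INR r + a) k)) N <=
  (INR r + a) * sum_f_R0 (fun k => Rabs (binom (INR r + a) k)) (S r) + a * (1 - a).
Proof.
  intros Ha HN. set (x := INR r + a). set (T k := INR k * Rabs (binom x k)).
  (* for [k > r], [x |b(x,k)| = T k - T (k+1)], so the tail telescopes *)
  assert (Htel : forall M, (S r <= M)%nat ->
    x * sum_f_R0 (fun k => Rabs (binom x k)) M + T (S M) =
    x * sum_f_R0 (fun k => Rabs (binom x k)) (S r) + T (S (S r))).
  { intros M HM. induction HM as [|M HM IH]; [reflexivity|].
    rewrite <- IH, tech5. unfold T. rewrite (Rmult_comm (INR (S (S M)))), Rabs_binom_S.
    assert (INR r + 1 <= INR M + 1) by (rewrite <- !S_INR; apply le_INR; lia).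
    rewrite S_INR, (Rabs_left1 (x - _)) by (unfold x; lra). ring. }
  assert (HT : T (S (S r)) <= a * (1 - a)).
  { unfold T. rewrite (Rmult_comm (INR (S (S r)))), Rabs_binom_S.
    replace (x - INR (S r)) with (a - 1) by (unfold x; rewrite S_INR; ring).
    destruct (binom_succ_le r a Ha) as [B0 B1]. fold x in B0, B1.
    rewrite (Rabs_pos_eq (binom _ _)), (Rabs_left1 (a - 1)) by lra. nra. }
  assert (0 <= T (S N)) by (apply Rmult_le_pos; [apply pos_INR|apply Rabs_pos]).
  specialize (Htel N HN). lra.
Qed.

Lemma sum_Rabs_binom_tail_le r a N : (1 <= r)%nat -> 0 <= a < 1 -> (S r <= N)%nat ->
  sum_f_R0 (fun k => Rabs (binom (INR r + a) k)) N <=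
  sum_f_R0 (fun k => Rabs (binom (INR r + a) k)) (S r) + / 4.
Proof.
  intros Hr Ha HN. pose proof (sum_Rabs_binom_tail r a N Ha HN).
  assert (1 <= INR r) by (apply (le_INR 1); lia).
  pose proof (Rmult_one_minus_le_quarter a).
  apply Rmult_le_reg_l with (INR r + a); [lra|]. nra.
Qed.

Lemma sum_Rabs_binom_le r a N : (1 <= r)%nat -> 0 <= a < 1 -> (S r <= N)%nat ->
  sum_f_R0 (fun k => Rabs (binom (INR r + a) k)) N <= 2 ^ S r + / 4.
Proof.
  intros Hr Ha HN. pose proof (sum_Rabs_binom_head r a Ha).
  pose proof (sum_Rabs_binom_tail_le r a N Hr Ha HN). lra.
Qed.

Lemma sum_Rabs_binom_0_le a N : 0 <= a < 1 -> (1 <= N)%nat ->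
  sum_f_R0 (fun k => Rabs (binom (INR 0 + a) k)) N <= 3.
Proof.
  intros Ha HN. destruct (Rlt_le_dec 0 a) as [Hpos|Hz].
  - pose proof (sum_Rabs_binom_tail 0 a N Ha HN). pose proof (sum_Rabs_binom_head 0 a Ha).
    simpl (INR 0) in *. simpl (2 ^ 1) in *. rewrite Rplus_0_l in *.
    apply Rmult_le_reg_l with a; [lra|]. nra.
  - replace a with 0 by lra. rewrite Rplus_0_l, decomp_sum, sum_eq_R0 by
      (try lia; intros i _; unfold binom;
       rewrite fallprod_S_l, Rmult_0_l, Rmult_0_r; apply Rabs_R0).
    unfold binom. simpl. rewrite Rinv_1, Rmult_1_l, Rabs_R1. lra.
Qed.

Definition damped_Rabs_binom (r : nat) (a : R) (k : nat) : R :=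
  if (k <=? S r)%nat then Rabs (binom (INR r + a) k) / 3 else Rabs (binom (INR r + a) k).

Lemma damped_Rabs_binom_nonneg r a k : 0 <= damped_Rabs_binom r a k.
Proof.
  unfold damped_Rabs_binom. pose proof (Rabs_pos (binom (INR r + a) k)).
  destruct (k <=? S r)%nat; lra.
Qed.

Lemma sum_damped_Rabs_binom_le r a N : (1 <= r)%nat -> 0 <= a < 1 -> (S r <= N)%nat ->
  sum_f_R0 (damped_Rabs_binom r a) N <= 2 ^ S r / 3 + / 4.
Proof.
  intros Hr Ha HN. set (F k := Rabs (binom (INR r + a) k)).
  assert (E : sum_f_R0 (damped_Rabs_binom r a) N =
     sum_f_R0 F N - 2 / 3 * sum_f_R0 F (S r)).
  { rewrite <- (sum_f_R0_truncate F (S r) N HN), scal_sum, <- minus_sum.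
    apply sum_eq. intros k _. unfold damped_Rabs_binom. fold (F k).
    destruct (k <=? S r)%nat; field. }
  rewrite E. pose proof (sum_Rabs_binom_head r a Ha).
  pose proof (sum_Rabs_binom_tail_le r a N Hr Ha HN).
  unfold F. lra.
Qed.

Section ConvNegComparison.

Variables (r1 r3 : nat) (a1 a3 : R).
Hypotheses (Ha1 : -1 < a1 < 1) (Ha3 : 0 <= a3 < 1) (Hr1 : a1 < 0 -> 2 <= INR r1).

Lemma shift_ratio_le i j : (i <= r1)%nat -> (2 <= j)%nat ->
  fallprod r3 (a3 + INR r3) / fallprod r3 (INR (j + r3)) <=
  fallprod r3 (INR r1 + a1 + INR r3) / fallprod r3 (INR (i + r3)).
Proof.
  intros Hi Hj. pose proof (pos_INR r3). pose proof (pos_INR i).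
  assert (Hpos : forall p, 0 < fallprod r3 (INR (p + r3)))
    by (intros p; apply fallprod_pos; rewrite plus_INR; pose proof (pos_INR p); lra).
  pose proof (Hpos i). pose proof (Hpos j).
  assert (Hi' : INR i <= INR r1) by (apply le_INR; lia).
  assert (Hj' : 2 <= INR j) by (apply (le_INR 2); lia).
  destruct (fallprod_mul_le r3 (a3 + INR r3) (INR (i + r3)) (INR r1 + a1 + INR r3) (INR (j + r3)))
    as [_ Hmul].
  { intros t Ht.
    assert (Hu : 1 <= INR r3 - INR t) by (rewrite <- minus_INR by lia; apply (le_INR 1); lia).
    rewrite !plus_INR. set (u := INR r3 - INR t) in *.
    replace (a3 + INR r3 - INR t) with (a3 + u) by (unfold u; ring).
    replace (INR i + INR r3 - INR t) with (INR i + u) by (unfold u; ring).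
    replace (INR r1 + a1 + INR r3 - INR t) with (INR r1 + a1 + u) by (unfold u; ring).
    replace (INR j + INR r3 - INR t) with (INR j + u) by (unfold u; ring).
    split; [apply Rmult_le_pos; lra|]. rewrite (Rmult_comm (INR r1 + a1 + u)).
    apply Rle_trans with ((a3 + u) * (INR r1 + u)); [apply Rmult_le_compat_l; lra|].
    apply Rle_trans with ((2 + u) * (INR r1 + a1 + u)); [|apply Rmult_le_compat_r; lra].
    destruct (Rle_lt_dec 0 a1); [apply Rmult_le_compat; lra|].
    specialize (Hr1 r). nra. }
  apply Rmult_le_reg_r with (fallprod r3 (INR (i + r3)) * fallprod r3 (INR (j + r3))); [nra|].
  unfold Rdiv. field_simplify; lra.
Qed.

Lemma negpart_shift_le i j : (i <= r1)%nat -> (2 <= j)%nat ->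
  negpart (binom (INR r1 + a1) i * binom (INR r3 + a3) (j + r3)) <=
  negpart (binom (INR r1 + a1 + INR r3) (i + r3) * binom a3 j).
Proof.
  intros Hi Hj. pose proof (shift_ratio_le i j Hi Hj) as Hq.
  rewrite (Rplus_comm (INR r3) a3), !binom_shift.
  set (q3 := fallprod r3 (a3 + INR r3) / fallprod r3 (INR (j + r3))) in *.
  set (q1 := fallprod r3 (INR r1 + a1 + INR r3) / fallprod r3 (INR (i + r3))) in *.
  assert (Hq3 : 0 <= q3).
  { pose proof (pos_INR r3). pose proof (pos_INR j).
    left. apply Rdiv_lt_0_compat; apply fallprod_pos; rewrite ?plus_INR; lra. }
  set (c := binom (INR r1 + a1) i * binom a3 j).
  replace (binom (INR r1 + a1) i * (binom a3 j * q3)) with (c * q3) by (unfold c; ring).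
  replace (binom (INR r1 + a1) i * q1 * binom a3 j) with (c * q1) by (unfold c; ring).
  rewrite !negpart_mulr by lra.
  apply Rmult_le_compat_l; [apply negpart_nonneg|lra].
Qed.

Lemma conv_neg_le_shifted m :
  sum_f_R0 (fun i => if (i <=? r1)%nat
                     then negpart (binom (INR r1 + a1) i * binom (INR r3 + a3) (m - i)) else 0) m
  <= conv_neg (INR r1 + a1 + INR r3) a3 m.
Proof.
  apply sum_f_R0_shift_le with (s := r3); [intros; apply negpart_nonneg| |].
  - intros i Him. destruct (Nat.leb_spec i r1) as [Hi|Hi]; [|apply negpart_nonneg].
    destruct (le_lt_dec (m - i) (S r3)) as [Hk|Hk].
    + rewrite negpart_of_nonneg; [apply negpart_nonneg|].
      apply Rmult_le_pos; apply binom_nonneg.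
      * assert (INR i <= INR r1) by (apply le_INR; lia). lra.
      * assert (INR (m - i) <= INR r3 + 1) by (rewrite <- S_INR; apply le_INR; lia). lra.
    + replace (m - i)%nat with ((m - i - r3) + r3)%nat by lia.
      replace (m - (i + r3))%nat with (m - i - r3)%nat by lia.
      apply negpart_shift_le; lia.
  - intros i Him. destruct (Nat.leb_spec i r1) as [Hi|Hi]; [|lra].
    rewrite negpart_of_nonneg; [lra|].
    apply Rmult_le_pos; apply binom_nonneg.
    + assert (INR i <= INR r1) by (apply le_INR; lia). lra.
    + assert (INR (m - i) <= INR r3) by (apply le_INR; lia). lra.
Qed.

(* Past [r1], [|b(x1,i)| <= 1], and [<= 1/3] when negative; up to [r3 + 1] the factor
   [b(x3,k)] is nonnegative, so only that negative case contributes there. *)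
Lemma negpart_past_le i k : (S r1 <= i)%nat ->
  negpart (binom (INR r1 + a1) i * binom (INR r3 + a3) k) <= damped_Rabs_binom r3 a3 k.
Proof.
  intros Hi. unfold damped_Rabs_binom.
  pose proof (Rabs_pos (binom (INR r3 + a3) k)).
  pose proof (negpart_le_Rabs (binom (INR r1 + a1) i * binom (INR r3 + a3) k)) as Hle.
  rewrite Rabs_mult in Hle.
  destruct (Nat.leb_spec k (S r3)) as [Hk|Hk].
  - assert (Hb3 : 0 <= binom (INR r3 + a3) k).
    { apply binom_nonneg.
      assert (INR k <= INR r3 + 1) by (rewrite <- S_INR; apply le_INR; lia). lra. }
    destruct (Rle_lt_dec 0 (binom (INR r1 + a1) i)).
    + rewrite negpart_of_nonneg by (apply Rmult_le_pos; lra). lra.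
    + pose proof (Rabs_binom_past_neg_le r1 a1 i Ha1 Hr1 Hi r).
      pose proof (Rabs_pos (binom (INR r1 + a1) i)). nra.
  - pose proof (Rabs_binom_past_le_1 r1 a1 i Ha1 Hi).
    pose proof (Rabs_pos (binom (INR r1 + a1) i)). nra.
Qed.

Lemma conv_neg_past_le m N : (m <= N)%nat ->
  sum_f_R0 (fun i => if (i <=? r1)%nat
                     then 0 else negpart (binom (INR r1 + a1) i * binom (INR r3 + a3) (m - i))) m
  <= sum_f_R0 (damped_Rabs_binom r3 a3) N.
Proof.
  intros Hm. apply Rle_trans with (sum_f_R0 (fun i => damped_Rabs_binom r3 a3 (m - i)) m).
  - apply sum_Rle. intros i Hi. destruct (Nat.leb_spec i r1).
    + apply damped_Rabs_binom_nonneg.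
    + apply negpart_past_le. lia.
  - rewrite sum_f_R0_reverse. apply sum_f_R0_le_sum_f_R0; [exact Hm|apply damped_Rabs_binom_nonneg].
Qed.

Lemma conv_neg_sub_le m N : (m <= N)%nat ->
  conv_neg (INR r1 + a1) (INR r3 + a3) m - conv_neg (INR r1 + a1 + INR r3) a3 m
  <= sum_f_R0 (damped_Rabs_binom r3 a3) N.
Proof.
  intros Hm. pose proof (conv_neg_le_shifted m). pose proof (conv_neg_past_le m N Hm).
  unfold conv_neg at 1. rewrite (sum_f_R0_split_at _ r1). lra.
Qed.

End ConvNegComparison.

Lemma fL_sub_le n r1 r2 r3 a1 a2 a3 : (0 < n)%nat ->
  -1 < a1 < 1 -> 0 <= a3 < 1 -> (a1 < 0 -> 2 <= INR r1) ->
  fL n r1 r2 r3 a1 a2 a3 - fL n (r1 + r3) r2 0 a1 a2 a3 <=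
  2 * sum_f_R0 (fun k => Rabs (binom (INR r2 + a2) k)) n *
      sum_f_R0 (damped_Rabs_binom r3 a3) n.
Proof.
  intros Hn Ha1 Ha3 Hr1. unfold fL.
  rewrite Lebesgue_sub_conv_neg by (try rewrite plus_INR; simpl; lra || lia).
  rewrite Rmult_assoc. apply Rmult_le_compat_l; [lra|].
  rewrite Rmult_comm, scal_sum. apply sum_Rle. intros i2 _.
  rewrite plus_INR. simpl (INR 0). rewrite Rplus_0_l.
  replace (INR r1 + INR r3 + a1) with (INR r1 + a1 + INR r3) by ring.
  apply Rmult_le_compat_l; [apply Rabs_pos|]. apply conv_neg_sub_le; auto; lia.
Qed.

Lemma INR_succ_le_pow2 r : INR r + 1 <= 2 ^ r.
Proof.
  induction r as [|r IH]; [simpl; lra|]. rewrite S_INR. simpl.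
  pose proof (pow_le 2 r ltac:(lra)). pose proof (pos_INR r). lra.
Qed.

Lemma ln_INR_gt_1 n : (4 <= n)%nat -> 1 < ln (INR n).
Proof.
  intros Hn. rewrite <- ln_exp at 1. apply ln_increasing; [apply exp_pos|].
  pose proof exp_le_3. pose proof (le_INR 4 n ltac:(lia)). simpl in *. lra.
Qed.

Theorem lemma15 (n r1 r2 r3 : nat) (a1 a2 a3 : R) :
  (4 <= n)%nat ->
  (r1 + r2 + r3 = n - 1)%nat ->
  -1 < a1 < 1 -> 0 <= a2 < 1 -> 0 <= a3 < 1 ->
  a1 + a2 + a3 = 1 ->
  INR r1 + a1 >= INR r2 + a2 ->
  INR r1 + a1 >= INR r3 + a3 ->
  fL n r1 r2 r3 a1 a2 a3 <=
    fL n (r1 + r3) r2 0 a1 a2 a3 + 2 ^ (r2 + r3 + 2) + 2 ^ r2 - INR r3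
    + (if (1 <=? r2)%nat then 2 ^ r3 else 2 ^ (r3 + 1) * ln (INR n)).
Proof.
  intros Hn Hr Ha1 Ha2 Ha3 Hsum _ H13.
  pose proof (INR_succ_le_pow2 r2). pose proof (INR_succ_le_pow2 r3). pose proof (ln_INR_gt_1 n Hn).
  rewrite !pow_add. simpl (2 ^ 1); simpl (2 ^ 2).
  destruct (Nat.eq_dec r3 0) as [->|Hr3].
  { rewrite Nat.add_0_r. simpl pow; simpl INR. pose proof (pos_INR r2).
    destruct (Nat.leb_spec 1 r2); nra. }
  assert (Hr1 : a1 < 0 -> 2 <= INR r1).
  { intros Hneg. assert (1 <= INR r3) by (apply (le_INR 1); lia).
    assert (1 < INR r1) by lra. apply (le_INR 2), INR_lt with (n := 1%nat); simpl; lra. }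
  pose proof (fL_sub_le n r1 r2 r3 a1 a2 a3 ltac:(lia) Ha1 Ha3 Hr1) as Hdiff.
  pose proof (sum_damped_Rabs_binom_le r3 a3 n ltac:(lia) Ha3 ltac:(lia)) as HSW.
  pose proof (cond_pos_sum _ n (damped_Rabs_binom_nonneg r3 a3)) as HSW0.
  pose proof (cond_pos_sum (fun k => Rabs (binom (INR r2 + a2) k)) n (fun k => Rabs_pos _)) as HSF0.
  set (SW := sum_f_R0 (damped_Rabs_binom r3 a3) n) in *.
  set (SF := sum_f_R0 (fun k => Rabs (binom (INR r2 + a2) k)) n) in *.
  simpl (2 ^ S r3) in HSW. pose proof (pos_INR r2). pose proof (pos_INR r3).
  destruct (Nat.leb_spec 1 r2) as [Hr2|Hr2].
  - assert (HSF : SF <= 2 * 2 ^ r2 + / 4) by (apply (sum_Rabs_binom_le r2 a2 n); lia || lra).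
    assert (2 * SF * SW <= 2 * (2 * 2 ^ r2 + / 4) * (2 * 2 ^ r3 / 3 + / 4))
      by (apply Rmult_le_compat; nra).
    assert (2 ^ r3 <= 2 ^ r2 * 2 ^ r3) by nra.
    nra.
  - assert (HSF : SF <= 3)
      by (unfold SF; replace r2 with 0%nat by lia; apply sum_Rabs_binom_0_le; lia || lra).
    replace r2 with 0%nat in Hdiff |- * by lia.
    assert (2 * SF * SW <= 2 * 3 * (2 * 2 ^ r3 / 3 + / 4)) by (apply Rmult_le_compat; nra).
    assert (2 ^ r3 <= 2 ^ r3 * ln (INR n)) by nra.
    simpl pow. lra.
Qed.
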